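(* Let $n\ge4$ and consider the cycle graph $C_n$. For $i\in[n]$ let $\mathrm{Dec}_i^n:=i(i-1)\cdots 1\,n(n-1)\cdots(i+1)$. (1) If $i\le n-2$, then for every $j\in[n]$: $B(j,\mathrm{Dec}_i^n,C_n)=j$ if $j\le n-2$; $B(n-1,\mathrm{Dec}_i^n,C_n)=i(i-1)\cdots1\,n(n-1)$; $B(n,\mathrm{Dec}_i^n,C_n)=i(i-1)\cdots1\,n$. Consequently the number of $C_n$-friendship parking functions with outcome $\mathrm{Dec}_i^n$ is $(i+1)(i+2)$. (2) For $i=n-1$: $B(j,\mathrm{Dec}_{n-1}^n,C_n)=j$ for all $j\in[n-1]$, and $B(n,\mathrm{Dec}_{n-1}^n,C_n)=(n-1)\cdots1\,n$. Consequently the number of $C_n$-friendship parking functions with outcome $\mathrm{Dec}_{n-1}^n$ is $n$. (3) For $i=n$: $B(j,\mathrm{Dec}_n^n,C_n)=j$ for all $j\in[n]$, and the number of $C_n$-friendship parking functions with outcome $\mathrm{Dec}_n^n$ is $1$.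
   Context: $C_n$ ($n\ge3$) is the cycle graph with vertex set $[n]$ and edges $\{i,i+1\}$ for $i\in[n-1]$ and $\{n,1\}$. Permutations are in one-line notation. Friendship parking process for a graph $G$ on $[n]$ and a parking preference $p\in[n]^n$: cars $1,\dots,n$ enter in order into spots $1,\dots,n$ (initially empty); spot $k$ is available for car $i$ if it is unoccupied when $i$ enters and each of spots $k-1,k+1$ is unoccupied or occupied by a car adjacent to $i$ in $G$ (spots $0,n+1$ count as unoccupied); car $i$ parks in the first available spot $k\ge p_i$, failing otherwise. $p$ is a $G$-friendship parking function if all cars park; its outcome is the permutation $\pi$ with $\pi_k$ the car in spot $k$ at the end. Blockers: for a permutation $\pi$ that is a Hamiltonian path of $G$ (i.e. $\{\pi_k,\pi_{k+1}\}$ is an edge for all $k$) and $i\in[n]$, $j=\pi_k$ is a blocker for $i$ if (1) $j\le i$, or (2) $j>i$ and some $\ell\in\{\pi_{k-1},\pi_{k+1}\}$ satisfies $\ell<i$ and $\ell$ not adjacent to $i$ in $G$. The blocking sequence $B(i,\pi,G)$ is the longest contiguous block of $\pi$ ending at $i$ consisting of blockers for $i$. *)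

From mathcomp Require Import all_boot.
Set Implicit Arguments. Unset Strict Implicit. Unset Printing Implicit Defensive.

Definition cycle_graph (n : nat) : rel nat := fun a b =>
  [&& 1 <= a <= n, 1 <= b <= n &
      [|| b == a.+1, a == b.+1, (a == 1) && (b == n) | (a == n) && (b == 1)]].

Definition Dec (n i : nat) : seq nat := rev (iota 1 i) ++ rev (iota i.+1 (n - i)).

(* pi_k (1-based position k) *)
Definition entry (pi : seq nat) (k : nat) : nat := nth 0 pi k.-1.

Definition nbrs (pi : seq nat) (k : nat) : seq nat :=
  [seq entry pi q | q <- [:: k.-1; k.+1] & (1 <= q <= size pi)].

Definition blocker (G : rel nat) (pi : seq nat) (i k : nat) : bool :=
  let j := entry pi k in
  (j <= i) || ((i < j) && has (fun l => (l < i) && ~~ G l i) (nbrs pi k)).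

(* B(i, pi, G): the longest contiguous block of pi ending at i made of blockers for i. *)
Definition blocking_seq (i : nat) (pi : seq nat) (G : rel nat) : seq nat :=
  let p := (index i pi).+1 in
  let len := find (fun k => ~~ blocker G pi i k) (rev (iota 1 p)) in
  drop (p - len) (take p pi).

(* Friendship parking process.  A state is a seq of length n: entry k-1 is the car
   in spot k, or 0 if spot k is empty.  Spots 0 and n+1 count as unoccupied. *)
Definition occ (n : nat) (s : seq nat) (k : nat) : nat :=
  if (1 <= k <= n) then nth 0 s k.-1 else 0.

Definition available (G : rel nat) (n : nat) (s : seq nat) (i k : nat) : bool :=
  [&& 1 <= k <= n, occ n s k == 0,
      (occ n s k.-1 == 0) || G (occ n s k.-1) i &
      (occ n s k.+1 == 0) || G (occ n s k.+1) i].

(* cars i, i+1, ... with preferences prefs enter in order; None = some car fails *)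
Fixpoint run (G : rel nat) (n : nat) (prefs : seq nat) (i : nat) (s : seq nat)
  : option (seq nat) :=
  match prefs with
  | [::] => Some s
  | p :: ps =>
      match [seq k <- iota p (n.+1 - p) | available G n s i k] with
      | [::] => None
      | k :: _ => run G n ps i.+1 (set_nth 0 s k.-1 i)
      end
  end.

Definition outcome (G : rel nat) (n : nat) (prefs : seq nat) : option (seq nat) :=
  run G n prefs 1 (nseq n 0).

(* A parking preference p in [n]^n is encoded as f : 'I_n -> 'I_n with
   p_{i+1} = f i + 1. *)
Definition prefs_of (n : nat) (f : {ffun 'I_n -> 'I_n}) : seq nat :=
  [seq (val (f i)).+1 | i <- enum 'I_n].

Definition num_fpf (G : rel nat) (n : nat) (pi : seq nat) : nat :=
  #|[set f : {ffun 'I_n -> 'I_n} | outcome G n (prefs_of f) == Some pi]|.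

From mathcomp Require Import all_boot zify.
Set Implicit Arguments. Unset Strict Implicit. Unset Printing Implicit Defensive.

(* Car c parks in spot k of the outcome pi exactly when k is the first spot at or after
   its preference that is available in the state where cars 1, ..., c-1 already occupy their
   final spots and all other spots are empty.  So the preferences with outcome pi form a
   product, car c contributing the preferences p whose first available spot from p on is
   the position of c in pi.  For Dec_i^n an explicit involution exchanges positions and
   cars, turning availability and the blocker condition into linear arithmetic: for the
   cars n-1 > i and n > i every earlier spot is unavailable and every earlier car blocks,
   while for every other car the spot just before its own (if any) is available and holds a
   non-blocker.  Hence car c admits exactly |B(c, Dec_i^n, C_n)| preferences. *)

Lemma head_filter_iotaP (A : pred nat) p m t : 0 < t ->
  head 0 [seq k <- iota p m | A k] = t <->
  [/\ p <= t < p + m, A t & forall k, p <= k < t -> ~~ A k].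
Proof.
move=> t_pos; elim: m p => [|m IH] p /=.
  by split=> [t0|[]]; lia.
case: ifP => Ap /=.
  split=> [<-|[t_range At unav]]; first by split=> [||k]; [lia | done | lia].
  have [p_lt|] := ltnP p t; last lia.
  by move: (unav p); rewrite leqnn p_lt Ap => /(_ isT).
rewrite IH; split=> -[t_range At unav].
  split=> // [|k k_range]; first lia.
  by have [->|kp] := eqVneq k p; [rewrite Ap | apply: unav; lia].
have tp : t != p by apply: contraTneq At => ->; rewrite Ap.
by split=> // [|k k_range]; [lia | apply: unav; lia].
Qed.

Lemma card_ord_interval n lo hi : lo <= hi <= n -> #|[pred y : 'I_n | lo <= y < hi]| = hi - lo.
Proof.
move=> lo_hi; rewrite -sum1_card big_mkcond /=.
suff -> : \sum_(y < n) (if lo <= y < hi then 1 else 0) = minn n hi - minn n lo by lia.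
elim: n {lo_hi} => [|n IH]; first by rewrite big_ord0; lia.
by rewrite big_ord_recr /= IH; case: ifP; lia.
Qed.

(* The state in which car c enters when the outcome is pi. *)
Definition partial_outcome (pi : seq nat) (c : nat) : seq nat :=
  [seq if x < c then x else 0 | x <- pi].

Lemma run_keeps_occupied G n ps c s s' : run G n ps c s = Some s' ->
  forall j, nth 0 s j != 0 -> nth 0 s' j = nth 0 s j.
Proof.
elim: ps c s => [|p ps IH] c s /=; first by case=> ->.
case E: [seq k <- iota p (n.+1 - p) | available G n s c k] => [//|k r] run_ps j sj.
have /andP[/and4P[k_range k_empty _ _] _] : available G n s c k && (k \in iota p (n.+1 - p)).
  by rewrite -mem_filter E mem_head.
rewrite /occ k_range in k_empty.
have jk : j != k.-1 by apply: contra sj => /eqP ->.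
by rewrite (IH _ _ run_ps) nth_set_nth /= (negbTE jk).
Qed.

Section FirstAvailable.

Variables (pi : seq nat) (G : rel nat) (n : nat).

Definition available_at (c k : nat) : bool := available G n (partial_outcome pi c) c k.

(* [0] when no spot is available. *)
Definition first_available (c p : nat) : nat :=
  head 0 [seq k <- iota p (n.+1 - p) | available_at c k].

(* The preferences [y.+1] of car [x.+1] that send it to its spot in pi. *)
Definition good_prefs (x : 'I_n) : pred 'I_n :=
  [pred y : 'I_n | first_available x.+1 y.+1 == (index x.+1 pi).+1].

Lemma card_good_prefs (x : 'I_n) t lo : (index x.+1 pi).+1 = t -> t <= n -> 1 <= lo <= t ->
  available_at x.+1 t -> (forall k, lo <= k < t -> ~~ available_at x.+1 k) ->
  (lo = 1 \/ available_at x.+1 lo.-1) ->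
  #|good_prefs x| = t - lo.-1.
Proof.
move=> <- t_le lo_range av_t unav_below av_lo.
rewrite -(@card_ord_interval n lo.-1 (index x.+1 pi).+1); last lia.
apply: eq_card => y; rewrite !inE /first_available.
apply/eqP/idP => [|/andP[lo_y y_t]]; rewrite head_filter_iotaP; try lia; last first.
  by split=> [||k k_range]; [lia | exact: av_t | apply: unav_below; lia].
move=> [y_range _ unav]; case: av_lo => [|av_lo]; first lia.
case: (leqP lo.-1 y) => [|y_lt]; first lia.
have : ~~ available_at x.+1 lo.-1 by apply: unav; lia.
by rewrite av_lo.
Qed.

End FirstAvailable.

Section PartialOutcomes.

Variables (pi : seq nat) (G : rel nat) (n : nat).
Hypotheses (pi_uniq : uniq pi) (pi_size : size pi = n).
Hypothesis mem_pi : forall x, (x \in pi) = (0 < x <= n).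

Lemma set_nth_partial_outcome c : c \in pi ->
  set_nth 0 (partial_outcome pi c) (index c pi) c = partial_outcome pi c.+1.
Proof.
move=> c_in; have c_lt : index c pi < size pi by rewrite index_mem.
apply: (@eq_from_nth _ 0); first by rewrite size_set_nth !size_map; apply/maxn_idPr.
move=> j; rewrite size_set_nth size_map (maxn_idPr c_lt) => j_lt.
rewrite nth_set_nth /= !(nth_map 0) //.
have [->|jc] := eqVneq j (index c pi); first by rewrite nth_index // ltnSn.
have : nth 0 pi j != c by apply: contra jc => /eqP <-; rewrite index_uniq.
by move/negbTE=> ne; rewrite ltnS (leq_eqVlt (nth 0 pi j)) ne.
Qed.

Lemma run_cons_partial_outcome p ps c : 0 < c <= n ->
  run G n (p :: ps) c (partial_outcome pi c) = Some pi <->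
  first_available pi G n c p = (index c pi).+1 /\
  run G n ps c.+1 (partial_outcome pi c.+1) = Some pi.
Proof.
move=> c_range; have c_in : c \in pi by rewrite mem_pi.
rewrite /first_available /=.
case E: [seq k <- iota p (n.+1 - p) | available_at pi G n c k] => [|k r] /=.
  by split=> // -[].
split=> [run_ps|[-> run_ps]]; last by rewrite set_nth_partial_outcome.
have /andP[/and4P[k_range _ _ _] _] : available_at pi G n c k && (k \in iota p (n.+1 - p)).
  by rewrite -mem_filter E mem_head.
have c0 : c != 0 by lia.
have := run_keeps_occupied run_ps (j := k.-1); rewrite nth_set_nth /= eqxx => /(_ c0) pi_k.
have idx_c : index c pi = k.-1 by rewrite -pi_k index_uniq // pi_size; lia.
by rewrite -idx_c set_nth_partial_outcome // in run_ps; split=> //; lia.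
Qed.

Lemma run_partial_outcomeP ps c : 0 < c -> c + size ps = n.+1 ->
  run G n ps c (partial_outcome pi c) = Some pi <->
  (forall t, t < size ps -> first_available pi G n (c + t) (nth 0 ps t) = (index (c + t) pi).+1).
Proof.
elim: ps c => [|p ps IH] c c_pos /= sz.
  suff -> : partial_outcome pi c = pi by [].
  rewrite -[RHS]map_id; apply/eq_in_map => x; rewrite mem_pi => x_range.
  by have -> : x < c by lia.
rewrite run_cons_partial_outcome ?(IH c.+1) //; try lia.
split=> [[first_c run_ps] [|t] t_lt|first_all].
- by rewrite addn0.
- by rewrite addnS -addSn run_ps.
split; first by have := first_all 0 isT; rewrite addn0.
by move=> t t_lt; rewrite addSn -addnS first_all.
Qed.

Lemma partial_outcome1 : partial_outcome pi 1 = nseq n 0.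
Proof.
apply: (@eq_from_nth _ 0); first by rewrite size_map size_nseq.
move=> j; rewrite size_map => j_lt; rewrite (nth_map 0) // nth_nseq -pi_size j_lt.
by have := mem_nth 0 j_lt; rewrite mem_pi; case: (nth 0 pi j).
Qed.

Lemma num_fpf_prod : num_fpf G n pi = \prod_(x < n) #|good_prefs pi G x|.
Proof.
have -> : \prod_(x < n) #|good_prefs pi G x| = foldr muln 1 [seq #|good_prefs pi G x| | x : 'I_n].
  by rewrite foldrE big_map big_enum.
rewrite /num_fpf -card_family; apply: eq_card => f.
rewrite inE /outcome -partial_outcome1.
have sz : 1 + size (prefs_of f) = n.+1 by rewrite size_map size_enum_ord.
have nth_prefs (x : 'I_n) : nth 0 (prefs_of f) x = (f x).+1.
  by rewrite (nth_map x) ?size_enum_ord // nth_ord_enum.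
apply/eqP/familyP => [/(run_partial_outcomeP _ sz) good x | good].
  by rewrite inE -nth_prefs good // size_map size_enum_ord.
apply/(run_partial_outcomeP _ sz) => // t; rewrite size_map size_enum_ord => t_lt.
by have := good (Ordinal t_lt); rewrite inE -nth_prefs => /eqP.
Qed.

End PartialOutcomes.

Lemma rev_iotaS m k : rev (iota m k.+1) = m + k :: rev (iota m k).
Proof. by rewrite -addn1 iotaD rev_cat. Qed.

Lemma has_nbrs (P : pred nat) pi k : has P (nbrs pi k) =
  (0 < k.-1 <= size pi) && P (entry pi k.-1) || (0 < k.+1 <= size pi) && P (entry pi k.+1).
Proof. by rewrite /nbrs /=; case: (0 < k.-1 <= size pi); case: (k < size pi); rewrite /= ?orbF. Qed.

Section BlockingSequences.

Variables (G : rel nat) (pi : seq nat) (j : nat).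
Hypothesis j_in : j \in pi.

Lemma blocker_self : blocker G pi j (index j pi).+1.
Proof. by rewrite /blocker /entry /= nth_index // leqnn. Qed.

Lemma blocking_seq_singleton : index j pi = 0 \/ ~~ blocker G pi j (index j pi) ->
  blocking_seq j pi G = [:: j].
Proof.
move=> before; rewrite /blocking_seq.
have j_lt : index j pi < size pi by rewrite index_mem.
suff -> : find (fun k => ~~ blocker G pi j k) (rev (iota 1 (index j pi).+1)) = 1.
  by rewrite subn1 /= (take_nth 0) // -cats1 drop_size_cat ?size_take ?j_lt // nth_index.
rewrite rev_iotaS add1n /= blocker_self /=.
case: before => [-> //|]; case: (index j pi) => [//|m] not_blocker.
by rewrite rev_iotaS add1n /= not_blocker.
Qed.

Lemma blocking_seq_prefix : (forall k, 1 <= k <= (index j pi).+1 -> blocker G pi j k) ->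
  blocking_seq j pi G = take (index j pi).+1 pi.
Proof.
move=> blockers; rewrite /blocking_seq.
suff -> : find (fun k => ~~ blocker G pi j k) (rev (iota 1 (index j pi).+1)) = (index j pi).+1.
  by rewrite subnn drop0.
set s := rev (iota 1 (index j pi).+1).
have size_s : size s = (index j pi).+1 by rewrite size_rev size_iota.
apply/eqP; rewrite eqn_leq -{1 2}size_s find_size /= leqNgt -has_find; apply/hasPn => k.
by rewrite mem_rev mem_iota negbK => k_range; apply: blockers; lia.
Qed.

End BlockingSequences.

(* The involution of [1, n] sending a position k to the k-th entry of [Dec n i], and hence
   a car to its position. *)
Definition dec_at (n i k : nat) : nat := if k <= i then i.+1 - k else n + i.+1 - k.

Lemma dec_atP n i k : (k <= i /\ dec_at n i k = i.+1 - k) \/ (i < k /\ dec_at n i k = n + i.+1 - k).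
Proof. by rewrite /dec_at; case: ifP; [left | right]; split=> //; lia. Qed.

Section DecreasingBlocks.

Variables n i : nat.
Hypothesis i_le_n : i <= n.

Lemma size_Dec : size (Dec n i) = n.
Proof. by rewrite size_cat !size_rev !size_iota; lia. Qed.

Lemma mem_Dec c : (c \in Dec n i) = (0 < c <= n).
Proof. by rewrite mem_cat !mem_rev !mem_iota; apply/idP/idP; lia. Qed.

Lemma uniq_Dec : uniq (Dec n i).
Proof.
rewrite cat_uniq !rev_uniq !iota_uniq andbT /=.
by apply/hasPn => x; rewrite !mem_rev !mem_iota; lia.
Qed.

Lemma nth_Dec k : k < n -> nth 0 (Dec n i) k = dec_at n i k.+1.
Proof.
move=> k_lt; rewrite nth_cat size_rev size_iota /dec_at.
case: ifP => k_i; first by rewrite nth_rev ?size_iota // nth_iota; lia.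
by rewrite nth_rev ?size_iota ?nth_iota; lia.
Qed.

Lemma dec_at_range k : 0 < k <= n -> 0 < dec_at n i k <= n.
Proof. by rewrite /dec_at; case: ifP; lia. Qed.

Lemma dec_atK k : 0 < k <= n -> dec_at n i (dec_at n i k) = k.
Proof. by rewrite {2}/dec_at; case: ifP; rewrite /dec_at; case: ifP; lia. Qed.

Lemma index_Dec c : 0 < c <= n -> (index c (Dec n i)).+1 = dec_at n i c.
Proof.
move=> c_range; have := dec_at_range c_range => pos_range.
have nth_c : nth 0 (Dec n i) (dec_at n i c).-1 = c by rewrite nth_Dec ?prednK ?dec_atK //; lia.
by rewrite -{1}nth_c index_uniq ?size_Dec ?uniq_Dec //; lia.
Qed.

Lemma take_Dec k : k <= n - i -> take (i + k) (Dec n i) = rev (iota 1 i) ++ rev (iota (n - k).+1 k).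
Proof.
move=> k_le; rewrite take_cat size_rev size_iota ltnNge leq_addr /= addKn.
by rewrite take_rev size_iota drop_iota; congr (_ ++ rev (iota _ _)); lia.
Qed.

Lemma occ_partial_DecP c k :
  (occ n (partial_outcome (Dec n i) c) k = 0 /\ (k = 0 \/ n < k \/ c <= dec_at n i k)) \/
  (occ n (partial_outcome (Dec n i) c) k = dec_at n i k /\ 0 < k <= n /\ dec_at n i k < c).
Proof.
rewrite /occ; case: ifP => k_range; last by left; split=> //; lia.
rewrite (nth_map 0) ?size_Dec //; last lia.
by rewrite nth_Dec ?prednK //; try lia; case: ifP; [right | left]; split=> //; lia.
Qed.

Lemma entry_DecP k : (0 < k <= n /\ entry (Dec n i) k = dec_at n i k) \/ (k = 0 \/ n < k).
Proof.
case: (boolP (0 < k <= n)) => k_range; last by right; lia.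
by left; split; rewrite // /entry nth_Dec ?prednK //; lia.
Qed.

End DecreasingBlocks.

(* The cars whose blocking sequence in [Dec n i] is the whole prefix ending at them; every
   other car blocks only itself. *)
Definition long_block (n i c : nat) : bool := (i < c) && (n - 1 <= c).

Section CycleArithmetic.

Variables n i : nat.
Hypotheses (n_ge4 : 4 <= n) (i_range : 0 < i <= n).

Let i_le_n : i <= n. Proof. by case/andP: i_range. Qed.

(* Branches are split and pruned one by one: one [lia] call on all the disjunctions is far
   slower. *)
Ltac split_cases :=
  repeat match goal with
  | |- (_ /\ _) \/ (_ /\ _) -> _ => case=> [[? ?]|[? ?]]; try (exfalso; lia)
  | |- (_ /\ _) \/ _ -> _ => case=> [[? ?]|?]; try (exfalso; lia)
  end.

Ltac spot_cases c k :=
  have := occ_partial_DecP i_le_n c k.-1; have := occ_partial_DecP i_le_n c k;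
  have := occ_partial_DecP i_le_n c k.+1;
  have := dec_atP n i k.-1; have := dec_atP n i k; have := dec_atP n i k.+1; have := dec_atP n i c;
  split_cases; rewrite /available_at /available /cycle_graph; lia.

Lemma available_Dec_target c : 0 < c <= n ->
  available_at (Dec n i) (cycle_graph n) n c (dec_at n i c).
Proof. by move=> c_range; spot_cases c (dec_at n i c). Qed.

Lemma available_Dec_below c : 0 < c <= n -> ~~ long_block n i c -> 1 < dec_at n i c ->
  available_at (Dec n i) (cycle_graph n) n c (dec_at n i c).-1.
Proof. by rewrite /long_block => c_range short pos; spot_cases c (dec_at n i c).-1. Qed.

Lemma unavailable_Dec_below c k : 0 < c <= n -> long_block n i c -> 0 < k < dec_at n i c ->
  ~~ available_at (Dec n i) (cycle_graph n) n c k.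
Proof. by rewrite /long_block => c_range long k_range; spot_cases c k. Qed.

Ltac neighbour_cases c k :=
  have := entry_DecP i_le_n k.-1; have := entry_DecP i_le_n k; have := entry_DecP i_le_n k.+1;
  have := dec_atP n i k.-1; have := dec_atP n i k; have := dec_atP n i k.+1; have := dec_atP n i c;
  split_cases; rewrite /blocker has_nbrs size_Dec // /cycle_graph; lia.

Lemma not_blocker_Dec_below c : 0 < c <= n -> ~~ long_block n i c -> 1 < dec_at n i c ->
  ~~ blocker (cycle_graph n) (Dec n i) c (dec_at n i c).-1.
Proof. by rewrite /long_block => c_range short pos; neighbour_cases c (dec_at n i c).-1. Qed.

Lemma blocker_Dec_below c k : 0 < c <= n -> long_block n i c -> 0 < k <= dec_at n i c ->
  blocker (cycle_graph n) (Dec n i) c k.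
Proof. by rewrite /long_block => c_range long k_range; neighbour_cases c k. Qed.

End CycleArithmetic.

Section DecBlockingSequences.

Variables n i : nat.
Hypotheses (n_ge4 : 4 <= n) (i_range : 0 < i <= n).

Let i_le_n : i <= n. Proof. by case/andP: i_range. Qed.

Lemma blocking_seq_Dec_short c : 0 < c <= n -> ~~ long_block n i c ->
  blocking_seq c (Dec n i) (cycle_graph n) = [:: c].
Proof.
move=> c_range short; apply: blocking_seq_singleton; first by rewrite mem_Dec.
have pos_c := index_Dec i_le_n c_range.
have [pos_gt1|] := ltnP 1 (dec_at n i c); last by left; lia.
right; have -> : index c (Dec n i) = (dec_at n i c).-1 by lia.
exact: not_blocker_Dec_below.
Qed.

Lemma blocking_seq_Dec_long c : 0 < c <= n -> long_block n i c ->
  blocking_seq c (Dec n i) (cycle_graph n) = take (dec_at n i c) (Dec n i).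
Proof.
move=> c_range long; rewrite blocking_seq_prefix ?mem_Dec ?index_Dec // => k.
exact: blocker_Dec_below.
Qed.

Lemma card_good_prefs_Dec (x : 'I_n) :
  #|good_prefs (Dec n i) (cycle_graph n) x| = size (blocking_seq x.+1 (Dec n i) (cycle_graph n)).
Proof.
have x_range : 0 < x.+1 <= n by rewrite ltn_ord.
have /andP[pos_x pos_le] := dec_at_range i_le_n x_range.
have av_x := available_Dec_target n_ge4 i_range x_range.
have [long|short] := boolP (long_block n i x.+1).
  rewrite blocking_seq_Dec_long // size_takel ?size_Dec //.
  rewrite (card_good_prefs (t := dec_at n i x.+1) (lo := 1)) ?index_Dec //; try lia.
  by move=> k k_range; apply: unavailable_Dec_below.
rewrite blocking_seq_Dec_short //.
rewrite (card_good_prefs (t := dec_at n i x.+1) (lo := dec_at n i x.+1)) ?index_Dec //=; try lia.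
have [pos_gt1|] := ltnP 1 (dec_at n i x.+1); last by left; lia.
by right; apply: available_Dec_below.
Qed.

Lemma num_fpf_Dec :
  num_fpf (cycle_graph n) n (Dec n i) =
  \prod_(1 <= c < n.+1) size (blocking_seq c (Dec n i) (cycle_graph n)).
Proof.
rewrite num_fpf_prod ?uniq_Dec ?size_Dec //; last exact: mem_Dec.
by rewrite big_add1 /= big_mkord; apply: eq_bigr => x _; apply: card_good_prefs_Dec.
Qed.

Lemma num_fpf_Dec_from m : m <= n ->
  (forall c, 0 < c <= m -> blocking_seq c (Dec n i) (cycle_graph n) = [:: c]) ->
  num_fpf (cycle_graph n) n (Dec n i) =
  \prod_(m.+1 <= c < n.+1) size (blocking_seq c (Dec n i) (cycle_graph n)).
Proof.
move=> m_le short; rewrite num_fpf_Dec (@big_cat_nat _ _ _ m.+1) //=.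
by rewrite big1_seq ?mul1n // => c; rewrite mem_index_iota => c_range; rewrite short.
Qed.

Lemma blocking_seq_Dec_long_tail c : c <= n -> long_block n i c ->
  blocking_seq c (Dec n i) (cycle_graph n) = rev (iota 1 i) ++ rev (iota c (n.+1 - c)).
Proof.
rewrite /long_block => c_le long; rewrite blocking_seq_Dec_long //; last lia.
have -> : dec_at n i c = i + (n.+1 - c) by rewrite /dec_at; case: ifP; lia.
rewrite take_Dec //; last lia.
by congr (_ ++ rev (iota _ _)); lia.
Qed.

Lemma blocking_seq_Dec_last : i < n ->
  blocking_seq n (Dec n i) (cycle_graph n) = rev (iota 1 i) ++ [:: n].
Proof. by move=> i_lt; rewrite blocking_seq_Dec_long_tail ?subSnn //; rewrite /long_block; lia. Qed.

Lemma blocking_seq_Dec_pred : i <= n - 2 ->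
  blocking_seq (n - 1) (Dec n i) (cycle_graph n) = rev (iota 1 i) ++ [:: n; n - 1].
Proof.
move=> i_le; rewrite blocking_seq_Dec_long_tail; [|lia | rewrite /long_block; lia].
have -> : n.+1 - (n - 1) = 2 by lia.
by have -> : iota (n - 1) 2 = [:: n - 1; n] by rewrite /= subn1 prednK //; lia.
Qed.

End DecBlockingSequences.

Theorem proposition2p8 (n : nat) : 4 <= n ->
  (forall i, 1 <= i <= n - 2 ->
     [/\ (forall j, 1 <= j <= n - 2 ->
            blocking_seq j (Dec n i) (cycle_graph n) = [:: j]),
         blocking_seq (n - 1) (Dec n i) (cycle_graph n) = rev (iota 1 i) ++ [:: n; n - 1],
         blocking_seq n (Dec n i) (cycle_graph n) = rev (iota 1 i) ++ [:: n] &
         num_fpf (cycle_graph n) n (Dec n i) = (i + 1) * (i + 2)])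
  /\
  [/\ (forall j, 1 <= j <= n - 1 ->
         blocking_seq j (Dec n (n - 1)) (cycle_graph n) = [:: j]),
      blocking_seq n (Dec n (n - 1)) (cycle_graph n) = rev (iota 1 (n - 1)) ++ [:: n] &
      num_fpf (cycle_graph n) n (Dec n (n - 1)) = n]
  /\
  ((forall j, 1 <= j <= n ->
      blocking_seq j (Dec n n) (cycle_graph n) = [:: j]) /\
   num_fpf (cycle_graph n) n (Dec n n) = 1).
Proof.
move=> n_ge4.
have short i m : 0 < i <= n -> (m <= n - 2) || (m <= i) ->
    forall j, 0 < j <= m -> blocking_seq j (Dec n i) (cycle_graph n) = [:: j].
  by move=> i_range m_le j j_range; apply: blocking_seq_Dec_short; rewrite /long_block; lia.
split; [move=> i i_range | split].
- have i_range' : 0 < i <= n by lia.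
  split; [by apply: short; lia | by apply: blocking_seq_Dec_pred; lia |
         by apply: blocking_seq_Dec_last; lia |].
  rewrite (num_fpf_Dec_from n_ge4 i_range' (m := n - 2)); [|lia | by apply: short; lia].
  rewrite big_ltn; last lia.
  have -> : (n - 2).+2 = n by lia.
  have -> : (n - 2).+1 = n - 1 by lia.
  rewrite big_nat1 blocking_seq_Dec_pred ?blocking_seq_Dec_last //; try lia.
  by rewrite !size_cat !size_rev !size_iota /=; lia.
- have i_range : 0 < n - 1 <= n by lia.
  split; [by apply: short; lia | by apply: blocking_seq_Dec_last; lia |].
  rewrite (num_fpf_Dec_from n_ge4 i_range (m := n - 1)); [|lia | by apply: short; lia].
  have -> : (n - 1).+1 = n by lia.
  rewrite big_nat1 blocking_seq_Dec_last //; last lia.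
  by rewrite size_cat size_rev size_iota /=; lia.
- have i_range : 0 < n <= n by lia.
  split; first by apply: short; lia.
  by rewrite (num_fpf_Dec_from n_ge4 i_range (m := n)) ?big_geq //; apply: short; lia.
Qed.
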